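(* Let $T=(V,E,r)$ be a finite rooted tree embedded in $\mathbb R^n$ as described in the context, and let $i,j,k$ be three adjacent nodes with $i<j$ and $i<k$, $j\neq k$ (i.e. $j$ and $k$ are distinct children of $i$). Assume: (A2) for all $x,x'\in[x_i,x_j]$ and $y,y'\in[x_i,x_k]$, $\ell([x_i,x])+\ell([x_i,y])\le\ell([x_i,x'])+\ell([x_i,y'])\Rightarrow\|\vec t(x)-\vec t(y)\|\le\|\vec t(x')-\vec t(y')\|$; (A3) there exist a neighborhood $U_i$ of $x_i$ and $0<a<2$ such that for all $x\in U_i\cap([x_i,x_j]\cup[x_i,x_k])$, $\|\vec t(x)-\vec t(x_i)\|\ge\ell([x_i,x])^a$. Then $$\langle\mu_{[x_i,x_j]},\mu_{[x_i,x_k]}\rangle_{W^\ast}=o\Big(\|\mu_{[x_i,x_j]}\|^2_{W^\ast}+\|\mu_{[x_i,x_k]}\|^2_{W^\ast}\Big)$$ as $\sigma_x,\sigma_t\to0$ with $\sigma_x\asymp\sigma_t$, where $\sigma_x\asymp\sigma_t$ means there exist constants $k_1,k_2>0$ with $k_1\sigma_x\le\sigma_t\le k_2\sigma_x$.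
   Context: Rooted tree and embedding. $T=(V,E,r)$ is a finite rooted tree with root $r$; $i<j$ means $i$ is the parent of $j$. The tree is embedded in $\mathbb R^n$ via an injective map $i\mapsto x_i\in\mathbb R^n$ and a map sending each edge $(i,j)$ to a smooth curve segment $[x_i,x_j]$ joining $x_i$ and $x_j$ (not necessarily a line segment); embeddings of two edges intersect only if the edges share a node, and only at the image of that node. The embedding of the path from $r$ to any node is a smooth, regular curve of finite length, oriented from the root to the end node; $[x,y]$ denotes the sub-arc between two points on a common embedded root-to-node path. $\ell(\gamma)$ is arc length, $\vec t(x)\in\mathbb S^{n-1}$ the unit oriented tangent vector at $x$ of the curve under consideration. For $\sigma_x,\sigma_t>0$ and smooth oriented curves $X,Y$ of finite length, $$\langle\mu_X,\mu_Y\rangle_{W^\ast}=\iint_{X\times Y} e^{-\|x-y\|^2/\sigma_x^2}\,e^{-\|\vec t(x)-\vec t(y)\|^2/\sigma_t^2}\,d\ell(x)\,d\ell(y),\qquad \|\mu_X\|^2_{W^\ast}=\langle\mu_X,\mu_X\rangle_{W^\ast}$$ (the oriented-varifold inner product induced by the Gaussian tensor-product kernel with parameters $\sigma_x,\sigma_t$). *)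

From Stdlib Require Import Reals Lra List.
From Coquelicot Require Import Coquelicot.
Import ListNotations.
Open Scope R_scope.

(** Points of R^n are represented as functions nat -> R; only the
    coordinates m < n are meaningful. *)
Definition point := nat -> R.

Definition pt_eq (n : nat) (p q : point) : Prop :=
  forall m, (m < n)%nat -> p m = q m.

Definition dist2 (n : nat) (p q : point) : R :=
  fold_right Rplus 0 (map (fun m => (p m - q m) ^ 2) (seq 0 n)).
Definition edist (n : nat) (p q : point) : R := sqrt (dist2 n p q).

Definition curve := R -> point.

(** (oriented) tangent vector = velocity; for arc-length parametrized
    curves this is the unit tangent. *)
Definition tvec (c : curve) (s : R) : point :=
  fun m => Derive (fun t => c t m) s.

Definition zero_pt : point := fun _ => 0.

Definition smooth_fun (f : R -> R) : Prop :=
  forall (q : nat) (x : R), ex_derive_n f q x.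

Fixpoint iter_par {V : Type} (par : V -> option V) (m : nat) (v : V) : option V :=
  match m with
  | O => Some v
  | S m' => match iter_par par m' v with Some w => par w | None => None end
  end.

Record rooted_tree := mkTree {
  node : Type;
  nodes : list node;
  nodes_complete : forall v, In v nodes;
  root : node;
  parent : node -> option node;                   (* parent i of j, i.e. i < j *)
  parent_root : parent root = None;
  parent_nonroot : forall v, v <> root -> parent v <> None;
  reaches_root : forall v, exists m, iter_par parent m v = Some root
}.

(** ---------- embedding of a rooted tree in R^n ----------
    Each non-root node v with parent p carries the edge (p,v), embedded as
    the curve [earc v] restricted to [0, elen v], parametrized by arc length
    and oriented from x_p to x_v (i.e. away from the root). *)
Record tree_embedding (n : nat) (T : rooted_tree) := mkEmb {
  npos : node T -> point;
  pos_inj : forall u v, pt_eq n (npos u) (npos v) -> u = v;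
  earc : node T -> curve;
  elen : node T -> R;
  edge_ok : forall v p, parent T v = Some p ->
    0 < elen v
    /\ (forall m, (m < n)%nat -> smooth_fun (fun s => earc v s m))
    /\ (forall s, 0 <= s <= elen v -> dist2 n (tvec (earc v) s) zero_pt = 1)
    /\ pt_eq n (earc v 0) (npos p)
    /\ pt_eq n (earc v (elen v)) (npos v)
    /\ (forall s u, 0 <= s <= elen v -> 0 <= u <= elen v ->
          pt_eq n (earc v s) (earc v u) -> s = u);
  edges_meet : forall v w pv pw,
    parent T v = Some pv -> parent T w = Some pw -> v <> w ->
    forall s u, 0 <= s <= elen v -> 0 <= u <= elen w ->
    pt_eq n (earc v s) (earc w u) ->
    exists z, (z = pv \/ z = v) /\ (z = pw \/ z = w) /\ pt_eq n (earc v s) (npos z);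
  (* every root-to-node path is a smooth curve: at each interior node p the
     arc-length parametrizations of the incoming and outgoing edges have
     matching derivatives of all orders *)
  path_smooth : forall v p, parent T v = Some p -> parent T p <> None ->
    forall (q m : nat), (1 <= q)%nat -> (m < n)%nat ->
    Derive_n (fun s => earc p s m) q (elen p) = Derive_n (fun s => earc v s m) q 0
}.

Arguments npos {n T}.
Arguments earc {n T}.
Arguments elen {n T}.

(** oriented varifold inner product (Gaussian kernels) of two arc-length
    parametrized curves c on [0,L] and c' on [0,L'] *)
Definition vip (n : nat) (sx st : R) (c : curve) (L : R) (c' : curve) (L' : R) : R :=
  RInt (fun s =>
    RInt (fun u =>
      exp (- dist2 n (c s) (c' u) / sx ^ 2)
      * exp (- dist2 n (tvec c s) (tvec c' u) / st ^ 2)) 0 L') 0 L.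

From Stdlib Require Import Reals Lra Lia List.
From Coquelicot Require Import Coquelicot.
Open Scope R_scope.

(* The self-energies are at least linear in [sx]: for a unit-speed curve, on the strip
   |s - u| <= sx the positions differ by O(sx) and the unit tangents by O(sx) = O(st),
   so both Gaussian factors of the kernel stay bounded below there.
   The cross energy is o(sx).  By (A2) the tangent gap |t_j(s) - t_k(u)| is nondecreasing
   in s + u, and (A3) (or distinct tangents at x_i) then gives |t_j(s) - t_k(u)| >= tau^a
   whenever s + u >= tau, for all small tau.  So the kernel is at most exp(-tau^(2a)/st^2)
   outside the triangle s + u < tau, whose area is at most tau^2.  With tau^2 = D sx both
   contributions are O(D sx), because a < 2 makes exp(-c sx^(a-2)) = o(sx); choosing D
   small against the self-energy constant concludes. *)

Lemma sum_map_nonneg {A} (f : A -> R) (l : list A) :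
  (forall x, In x l -> 0 <= f x) -> 0 <= fold_right Rplus 0 (map f l).
Proof.
  induction l as [|y l IH]; intros H; cbn [map fold_right]; [lra|].
  apply Rplus_le_le_0_compat; [apply H; left | apply IH; intros x Hx; apply H; right]; auto.
Qed.

Lemma sum_map_le {A} (f g : A -> R) (l : list A) :
  (forall x, In x l -> f x <= g x) ->
  fold_right Rplus 0 (map f l) <= fold_right Rplus 0 (map g l).
Proof.
  induction l as [|y l IH]; intros H; cbn [map fold_right]; [lra|].
  apply Rplus_le_compat; [apply H; left | apply IH; intros x Hx; apply H; right]; auto.
Qed.

Lemma sum_map_const {A} (c : R) (l : list A) :
  fold_right Rplus 0 (map (fun _ => c) l) = INR (length l) * c.
Proof.
  induction l as [|y l IH]; cbn [map fold_right length]; [simpl; ring|].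
  rewrite IH, S_INR. ring.
Qed.

Lemma sum_map_term {A} (f : A -> R) (l : list A) x :
  (forall y, In y l -> 0 <= f y) -> In x l -> f x <= fold_right Rplus 0 (map f l).
Proof.
  induction l as [|y l IH]; intros H Hx; [destruct Hx|]. cbn [map fold_right].
  assert (Hy : 0 <= f y) by (apply H; left; reflexivity).
  assert (Hl : 0 <= fold_right Rplus 0 (map f l))
    by (apply sum_map_nonneg; intros z Hz; apply H; right; exact Hz).
  destruct Hx as [<- | Hx]; [lra|].
  assert (f x <= fold_right Rplus 0 (map f l))
    by (apply IH; auto; intros z Hz; apply H; right; exact Hz).
  lra.
Qed.

Lemma dist2_nonneg n p q : 0 <= dist2 n p q.
Proof. apply sum_map_nonneg. intros; apply pow2_ge_0. Qed.

Lemma dist2_le_coord n p q C :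
  (forall m, (m < n)%nat -> (p m - q m) ^ 2 <= C) -> dist2 n p q <= INR n * C.
Proof.
  intros H. unfold dist2.
  replace (INR n * C) with (fold_right Rplus 0 (map (fun _ => C) (seq 0 n)))
    by (rewrite sum_map_const, length_seq; reflexivity).
  apply sum_map_le. intros m Hm. apply in_seq in Hm. apply H; lia.
Qed.

Lemma coord_sq_le_dist2 n p q m : (m < n)%nat -> (p m - q m) ^ 2 <= dist2 n p q.
Proof.
  intros Hm. apply (sum_map_term (fun m => (p m - q m) ^ 2));
    [intros; apply pow2_ge_0 | apply in_seq; lia].
Qed.

Lemma dist2_ext n p q p' q' : pt_eq n p p' -> pt_eq n q q' -> dist2 n p q = dist2 n p' q'.
Proof.
  intros Hp Hq. unfold dist2. f_equal. apply map_ext_in.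
  intros m Hm. apply in_seq in Hm. rewrite Hp, Hq by lia. reflexivity.
Qed.

Lemma dist2_eq0 n p q : dist2 n p q = 0 -> pt_eq n p q.
Proof. intros H m Hm. pose proof (coord_sq_le_dist2 n p q m Hm). nra. Qed.

Lemma continuity_2d_pt_sum_map {A} (g : A -> R -> R -> R) (l : list A) x y :
  (forall m, In m l -> continuity_2d_pt (g m) x y) ->
  continuity_2d_pt (fun s u => fold_right Rplus 0 (map (fun m => g m s u) l)) x y.
Proof.
  induction l as [|a l IH]; intros H; cbn [map fold_right].
  - apply continuity_2d_pt_const.
  - apply continuity_2d_pt_plus; [apply H; left | apply IH; intros m Hm; apply H; right]; auto.
Qed.

Lemma continuity_2d_pt_fst (f : R -> R) x y :
  continuity_pt f x -> continuity_2d_pt (fun s _ => f s) x y.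
Proof.
  intros H. apply (continuity_1d_2d_pt_comp f (fun s _ => s));
    [exact H | apply continuity_2d_pt_id1].
Qed.

Lemma continuity_2d_pt_snd (f : R -> R) x y :
  continuity_pt f y -> continuity_2d_pt (fun _ u => f u) x y.
Proof.
  intros H. apply (continuity_1d_2d_pt_comp f (fun _ u => u));
    [exact H | apply continuity_2d_pt_id2].
Qed.

Lemma continuity_2d_pt_dist2 n (P Q : R -> point) x y :
  (forall m, (m < n)%nat -> continuity_pt (fun s => P s m) x) ->
  (forall m, (m < n)%nat -> continuity_pt (fun u => Q u m) y) ->
  continuity_2d_pt (fun s u => dist2 n (P s) (Q u)) x y.
Proof.
  intros HP HQ. apply (continuity_2d_pt_sum_map (fun m s u => (P s m - Q u m) ^ 2)).
  intros m Hm. apply in_seq in Hm.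
  assert (Hd : continuity_2d_pt (fun s u => P s m - Q u m) x y).
  { apply continuity_2d_pt_minus;
      [apply continuity_2d_pt_fst, HP | apply continuity_2d_pt_snd, HQ]; lia. }
  apply (continuity_2d_pt_ext (fun s u => (P s m - Q u m) * (P s m - Q u m))); [intros; ring|].
  apply continuity_2d_pt_mult; exact Hd.
Qed.

Lemma continuity_2d_pt_gauss (G : R -> R -> R) sg x y :
  continuity_2d_pt G x y -> continuity_2d_pt (fun s u => exp (- G s u / sg ^ 2)) x y.
Proof.
  intros H. apply (continuity_1d_2d_pt_comp exp (fun s u => - G s u / sg ^ 2)).
  - apply derivable_continuous_pt, derivable_pt_exp.
  - unfold Rdiv. apply continuity_2d_pt_mult;
      [apply continuity_2d_pt_opp, H | apply continuity_2d_pt_const].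
Qed.

Lemma RInt_cst (c a b : R) : RInt (V:=R_CompleteNormedModule) (fun _ => c) a b = (b - a) * c.
Proof. rewrite RInt_const. reflexivity. Qed.

Lemma RInt_le_const (f : R -> R) a b M : a <= b -> ex_RInt f a b ->
  (forall x, a < x < b -> f x <= M) -> RInt f a b <= (b - a) * M.
Proof. intros Hab Hf H. rewrite <- RInt_cst. apply RInt_le; auto. apply ex_RInt_const. Qed.

Lemma RInt_ge_const (f : R -> R) a b M : a <= b -> ex_RInt f a b ->
  (forall x, a < x < b -> M <= f x) -> (b - a) * M <= RInt f a b.
Proof. intros Hab Hf H. rewrite <- RInt_cst. apply RInt_le; auto. apply ex_RInt_const. Qed.

Lemma RInt_split (f : R -> R) a b c : ex_RInt f a b -> ex_RInt f b c ->
  RInt f a c = RInt f a b + RInt f b c.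
Proof. intros H1 H2. rewrite <- (RInt_Chasles f a b c H1 H2). reflexivity. Qed.

Definition RInt_rect (F : R -> R -> R) (L L' : R) : R :=
  RInt (fun s => RInt (F s) 0 L') 0 L.

Section ContinuousKernel.
Variable F : R -> R -> R.
Hypothesis F_cont : forall s u, continuity_2d_pt F s u.

Lemma ex_RInt_section s a b : ex_RInt (F s) a b.
Proof.
  apply (ex_RInt_continuous (V:=R_CompleteNormedModule)). intros u _.
  apply continuity_pt_filterlim, continuity_pt_locally. intros eps.
  destruct (F_cont s u eps) as [d Hd]. exists d. intros v Hv.
  apply Hd; [rewrite Rminus_diag, Rabs_R0; apply cond_pos | exact Hv].
Qed.

Lemma continuous_RInt_section L s0 : 0 <= L -> continuous (fun s => RInt (F s) 0 L) s0.
Proof.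
  intros HL. apply continuity_pt_filterlim, continuity_pt_locally. intros eps.
  assert (He : 0 < eps / (L + 1)) by (apply Rdiv_lt_0_compat; [apply cond_pos | lra]).
  destruct (uniform_continuity_2d_1d' F 0 L s0 (fun u _ => F_cont s0 u) (mkposreal _ He))
    as [d Hd].
  exists d. intros s Hs. change (Rabs (s - s0) < d) in Hs. apply Rabs_lt_between' in Hs.
  pose proof (cond_pos d).
  assert (Hdiff : RInt (F s) 0 L - RInt (F s0) 0 L = RInt (fun u => F s u - F s0 u) 0 L).
  { symmetry. apply (RInt_minus (V:=R_CompleteNormedModule)); apply ex_RInt_section. }
  rewrite Hdiff.
  apply Rle_lt_trans with ((L - 0) * (eps / (L + 1))).
  - apply abs_RInt_le_const;
      [lra | apply (ex_RInt_minus (V:=R_NormedModule)); apply ex_RInt_section |].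
    intros u Hu. apply Rlt_le, Hd; try lra.
    rewrite Rminus_diag, Rabs_R0. apply cond_pos.
  - pose proof (cond_pos eps).
    apply Rmult_lt_reg_r with (L + 1); [lra|].
    replace ((L - 0) * (eps / (L + 1)) * (L + 1)) with (L * eps) by (field; lra). nra.
Qed.

Lemma ex_RInt_RInt_section L a b : 0 <= L -> ex_RInt (fun s => RInt (F s) 0 L) a b.
Proof.
  intros HL. apply (ex_RInt_continuous (V:=R_CompleteNormedModule)).
  intros s _. apply continuous_RInt_section, HL.
Qed.

Hypothesis F_ge0 : forall s u, 0 <= F s u.

Lemma RInt_section_ge0 s a b : a <= b -> 0 <= RInt (F s) a b.
Proof. intros Hab. apply RInt_ge_0; auto using ex_RInt_section. Qed.

Lemma RInt_rect_ge0 L L' : 0 <= L -> 0 <= L' -> 0 <= RInt_rect F L L'.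
Proof.
  intros HL HL'. apply RInt_ge_0; auto using ex_RInt_RInt_section.
  intros; apply RInt_section_ge0, HL'.
Qed.

Lemma RInt_rect_diag_lower L h m : 0 < h -> 2 * h <= L ->
  (forall s u, 0 <= s <= L -> 0 <= u <= L -> Rabs (s - u) <= h -> m <= F s u) ->
  L / 2 * (h * m) <= RInt_rect F L L.
Proof.
  intros Hh HL Hm. unfold RInt_rect.
  assert (Io : forall a b, ex_RInt (fun s => RInt (F s) 0 L) a b)
    by (intros; apply ex_RInt_RInt_section; lra).
  assert (Ii := ex_RInt_section).
  rewrite (RInt_split _ 0 (L / 2) L) by auto.
  assert (0 <= RInt (fun s => RInt (F s) 0 L) (L / 2) L).
  { apply RInt_ge_0; auto; [lra|]. intros; apply RInt_section_ge0; lra. }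
  assert (L / 2 * (h * m) <= RInt (fun s => RInt (F s) 0 L) 0 (L / 2)).
  { replace (L / 2 * (h * m)) with ((L / 2 - 0) * (h * m)) by ring.
    apply RInt_ge_const; [lra | auto |]. intros s Hs.
    rewrite (RInt_split (F s) 0 s L), (RInt_split (F s) s (s + h) L) by auto.
    assert (h * m <= RInt (F s) s (s + h)).
    { replace (h * m) with ((s + h - s) * m) by ring.
      apply RInt_ge_const; [lra | auto |].
      intros u Hu. apply Hm; try lra. rewrite Rabs_left1; lra. }
    pose proof (RInt_section_ge0 s 0 s ltac:(lra)).
    pose proof (RInt_section_ge0 s (s + h) L ltac:(lra)).
    lra. }
  lra.
Qed.

Hypothesis F_le1 : forall s u, F s u <= 1.

Lemma RInt_rect_upper L L' tau eta : 0 < tau -> tau <= L -> tau <= L' -> 0 <= eta ->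
  (forall s u, 0 <= s <= L -> 0 <= u <= L' -> tau <= s + u -> F s u <= eta) ->
  RInt_rect F L L' <= tau ^ 2 + L * L' * eta.
Proof.
  intros Ht HL HL' He Hb. unfold RInt_rect.
  assert (Io : forall a b, ex_RInt (fun s => RInt (F s) 0 L') a b)
    by (intros; apply ex_RInt_RInt_section; lra).
  assert (Ii := ex_RInt_section).
  rewrite (RInt_split _ 0 tau L) by auto.
  assert (RInt (fun s => RInt (F s) 0 L') 0 tau <= (tau - 0) * (tau + L' * eta)).
  { apply RInt_le_const; [lra | auto |]. intros s Hs.
    rewrite (RInt_split (F s) 0 tau L') by auto.
    assert (RInt (F s) 0 tau <= (tau - 0) * 1)
      by (apply RInt_le_const; [lra | auto | intros; apply F_le1]).
    assert (RInt (F s) tau L' <= (L' - tau) * eta).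
    { apply RInt_le_const; [lra | auto |]. intros u Hu; apply Hb; lra. }
    nra. }
  assert (RInt (fun s => RInt (F s) 0 L') tau L <= (L - tau) * (L' * eta)).
  { apply RInt_le_const; [lra | auto |]. intros s Hs.
    replace (L' * eta) with ((L' - 0) * eta) by ring.
    apply RInt_le_const; [lra | auto |]. intros u Hu; apply Hb; lra. }
  nra.
Qed.

End ContinuousKernel.

Lemma continuity_pt_ex_derive (f : R -> R) x : ex_derive f x -> continuity_pt f x.
Proof. intros H. apply continuity_pt_filterlim. exact (ex_derive_continuous f x H). Qed.

Lemma Rabs_sub_le_of_Derive_bound (f : R -> R) (L K : R) :
  (forall x, ex_derive f x) ->
  (forall x, 0 <= x <= L -> Rabs (Derive f x) <= K) ->
  forall s u, 0 <= s <= L -> 0 <= u <= L -> Rabs (f s - f u) <= K * Rabs (s - u).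
Proof.
  intros Hd HK s u Hs Hu.
  destruct (MVT_gen f u s (Derive f)) as [c [Hc Heq]].
  - intros x _. apply Derive_correct, Hd.
  - intros x _. apply continuity_pt_ex_derive, Hd.
  - rewrite Heq, Rabs_mult. apply Rmult_le_compat_r; [apply Rabs_pos|].
    apply HK. split.
    + apply Rle_trans with (Rmin u s); [apply Rmin_glb; lra | apply Hc].
    + apply Rle_trans with (Rmax u s); [apply Hc | apply Rmax_lub; lra].
Qed.

Lemma continuous_bounded_on_segment (g : R -> R) a b : a <= b ->
  (forall x, continuity_pt g x) -> exists K, forall x, a <= x <= b -> Rabs (g x) <= K.
Proof.
  intros Hab Hc.
  destruct (continuity_ab_maj (fun x => Rabs (g x)) a b Hab) as [M [HM _]].
  - intros x _. apply (continuity_pt_comp g Rabs); [apply Hc | apply Rcontinuity_abs].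
  - exists (Rabs (g M)). exact HM.
Qed.

Lemma bound_uniform_nat n (P : nat -> R -> Prop) :
  (forall m K K', K <= K' -> P m K -> P m K') ->
  (forall m, (m < n)%nat -> exists K, P m K) ->
  exists K, forall m, (m < n)%nat -> P m K.
Proof.
  intros Hmono. induction n as [|n IH]; intros H.
  - exists 0. intros; lia.
  - destruct IH as [K1 H1]; [intros; apply H; lia|].
    destruct (H n ltac:(lia)) as [K2 H2].
    exists (Rmax K1 K2). intros m Hm. destruct (Nat.eq_dec m n) as [->|Hne].
    + apply Hmono with K2; [apply Rmax_r | exact H2].
    + apply Hmono with K1; [apply Rmax_l | apply H1; lia].
Qed.

Lemma exp_le_compat x y : x <= y -> exp x <= exp y.
Proof. intros [H | ->]; [apply Rlt_le, exp_increasing, H | lra]. Qed.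

Lemma exp_neg_div_sq_le e d st sg : 0 <= e <= d -> 0 < st <= sg ->
  exp (- d / st ^ 2) <= exp (- e / sg ^ 2).
Proof.
  intros He Hs. apply exp_le_compat. unfold Rdiv.
  rewrite !Ropp_mult_distr_l_reverse. apply Ropp_le_contravar.
  apply Rmult_le_compat; try lra.
  - apply Rlt_le, Rinv_0_lt_compat, pow_lt; lra.
  - apply Rinv_le_contravar; [apply pow_lt; lra | apply pow_incr; lra].
Qed.

Lemma exp_neg_div_sq_le1 d sg : 0 <= d -> 0 < sg -> exp (- d / sg ^ 2) <= 1.
Proof.
  intros Hd Hs. rewrite <- exp_0. apply exp_le_compat.
  assert (0 <= d / sg ^ 2) by (apply Rdiv_le_0_compat; [lra | apply pow_lt; lra]).
  unfold Rdiv in *. lra.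
Qed.

Definition smooth_curve n (c : curve) : Prop :=
  forall m, (m < n)%nat -> smooth_fun (fun s => c s m).

Definition unit_speed n (c : curve) (L : R) : Prop :=
  forall s, 0 <= s <= L -> dist2 n (tvec c s) zero_pt = 1.

Section SmoothCurve.
Variables (n : nat) (c : curve) (L : R).
Hypothesis c_smooth : smooth_curve n c.

Lemma continuity_pt_curve m x : (m < n)%nat -> continuity_pt (fun s => c s m) x.
Proof. intros Hm. apply continuity_pt_ex_derive, (c_smooth m Hm 1%nat). Qed.

Lemma continuity_pt_tvec m x : (m < n)%nat -> continuity_pt (fun s => tvec c s m) x.
Proof. intros Hm. apply continuity_pt_ex_derive, (c_smooth m Hm 2%nat). Qed.

Lemma tvec_lipschitz : exists K, 0 <= K /\
  forall s u, 0 <= s <= L -> 0 <= u <= L -> dist2 n (tvec c s) (tvec c u) <= K * (s - u) ^ 2.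
Proof.
  destruct (bound_uniform_nat n (fun m K => forall s u, 0 <= s <= L -> 0 <= u <= L ->
      Rabs (tvec c s m - tvec c u m) <= K * Rabs (s - u))) as [K HK].
  - intros m K K' HKK' H s u Hs Hu. eapply Rle_trans; [apply H; auto|].
    apply Rmult_le_compat_r; [apply Rabs_pos | exact HKK'].
  - intros m Hm. destruct (Rle_or_lt 0 L) as [HL | HL].
    2: { exists 0. intros; lra. }
    destruct (continuous_bounded_on_segment (Derive (Derive (fun t => c t m))) 0 L HL)
      as [K HKb].
    { intros x. apply continuity_pt_ex_derive, (c_smooth m Hm 3%nat). }
    exists K. apply Rabs_sub_le_of_Derive_bound;
      [intros x; apply (c_smooth m Hm 2%nat) | exact HKb].
  - exists (INR n * K ^ 2). split; [apply Rmult_le_pos; [apply pos_INR | apply pow2_ge_0]|].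
    intros s u Hs Hu. rewrite <- (pow2_abs (s - u)), Rmult_assoc, <- Rpow_mult_distr.
    apply dist2_le_coord. intros m Hm.
    apply pow_maj_Rabs, HK; auto.
Qed.

Hypothesis c_unit : unit_speed n c L.

Lemma curve_coord_lipschitz m s u : (m < n)%nat -> 0 <= s <= L -> 0 <= u <= L ->
  Rabs (c s m - c u m) <= Rabs (s - u).
Proof.
  intros Hm Hs Hu. rewrite <- (Rmult_1_l (Rabs (s - u))).
  apply (Rabs_sub_le_of_Derive_bound (fun t => c t m) L 1); auto.
  - intros x; apply (c_smooth m Hm 1%nat).
  - intros x Hx. pose proof (coord_sq_le_dist2 n (tvec c x) zero_pt m Hm) as H.
    rewrite c_unit in H by exact Hx. unfold zero_pt, tvec in H.
    apply Rabs_le. nra.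
Qed.

Lemma dist2_curve_le s u : 0 <= s <= L -> 0 <= u <= L -> dist2 n (c s) (c u) <= INR n * (s - u) ^ 2.
Proof.
  intros Hs Hu. apply dist2_le_coord. intros m Hm.
  rewrite <- (pow2_abs (s - u)). apply pow_maj_Rabs, curve_coord_lipschitz; auto.
Qed.

End SmoothCurve.

Definition vkernel n sx st (c c' : curve) (s u : R) : R :=
  exp (- dist2 n (c s) (c' u) / sx ^ 2) * exp (- dist2 n (tvec c s) (tvec c' u) / st ^ 2).

Lemma vip_RInt_rect n sx st c L c' L' :
  vip n sx st c L c' L' = RInt_rect (vkernel n sx st c c') L L'.
Proof. reflexivity. Qed.

Lemma vkernel_ge0 n sx st c c' s u : 0 <= vkernel n sx st c c' s u.
Proof. apply Rmult_le_pos; apply Rlt_le, exp_pos. Qed.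

Lemma vkernel_le_tangent_factor n sx st c c' s u : 0 < sx ->
  vkernel n sx st c c' s u <= exp (- dist2 n (tvec c s) (tvec c' u) / st ^ 2).
Proof.
  intros Hsx. unfold vkernel.
  pose proof (exp_neg_div_sq_le1 _ _ (dist2_nonneg n (c s) (c' u)) Hsx).
  pose proof (exp_pos (- dist2 n (tvec c s) (tvec c' u) / st ^ 2)). nra.
Qed.

Lemma vkernel_le1 n sx st c c' s u : 0 < sx -> 0 < st -> vkernel n sx st c c' s u <= 1.
Proof.
  intros Hsx Hst. eapply Rle_trans; [apply vkernel_le_tangent_factor, Hsx|].
  apply exp_neg_div_sq_le1; [apply dist2_nonneg | exact Hst].
Qed.

Lemma continuity_2d_pt_vkernel n sx st c c' s u :
  smooth_curve n c -> smooth_curve n c' -> continuity_2d_pt (vkernel n sx st c c') s u.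
Proof.
  intros Hc Hc'. apply continuity_2d_pt_mult; apply continuity_2d_pt_gauss, continuity_2d_pt_dist2;
    intros m Hm; [apply (continuity_pt_curve n c) | apply (continuity_pt_curve n c')
                 | apply (continuity_pt_tvec n c) | apply (continuity_pt_tvec n c')]; auto.
Qed.

Lemma vip_ge0 n sx st c L c' L' : 0 <= L -> 0 <= L' ->
  smooth_curve n c -> smooth_curve n c' -> 0 <= vip n sx st c L c' L'.
Proof.
  intros HL HL' Hc Hc'. apply RInt_rect_ge0; auto.
  - intros; apply continuity_2d_pt_vkernel; auto.
  - intros; apply vkernel_ge0.
Qed.

Lemma vip_self_lower n c L k1 : 0 < L -> 0 < k1 -> smooth_curve n c -> unit_speed n c L ->
  exists c0, 0 < c0 /\ forall sx st, 0 < sx -> 2 * sx <= L -> k1 * sx <= st ->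
    c0 * sx <= vip n sx st c L c L.
Proof.
  intros HL Hk1 Hc Hunit. destruct (tvec_lipschitz n c L Hc) as [K [HK HKlip]].
  set (m0 := exp (- INR n) * exp (- (K / k1 ^ 2))).
  assert (Hm0 : 0 < m0) by (apply Rmult_lt_0_compat; apply exp_pos).
  exists (L / 2 * m0). split; [apply Rmult_lt_0_compat; lra|].
  intros sx st Hsx HLsx Hst.
  replace (L / 2 * m0 * sx) with (L / 2 * (sx * m0)) by ring.
  apply RInt_rect_diag_lower; auto.
  - intros; apply continuity_2d_pt_vkernel; auto.
  - intros; apply vkernel_ge0.
  - intros s u Hs Hu Hsu.
    assert (Hsu2 : (s - u) ^ 2 <= sx ^ 2).
    { rewrite <- (pow2_abs (s - u)). apply pow_incr. split; [apply Rabs_pos | exact Hsu]. }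
    apply Rmult_le_compat; try (apply Rlt_le, exp_pos).
    + replace (- INR n) with (- (INR n * sx ^ 2) / sx ^ 2) by (field; lra).
      apply exp_neg_div_sq_le; [split; [apply dist2_nonneg|] | lra].
      eapply Rle_trans; [apply (dist2_curve_le n c L); auto|].
      apply Rmult_le_compat_l; [apply pos_INR | exact Hsu2].
    + replace (- (K / k1 ^ 2)) with (- (K * sx ^ 2) / (k1 * sx) ^ 2) by (field; lra).
      apply exp_neg_div_sq_le; [split; [apply dist2_nonneg|] | nra].
      eapply Rle_trans; [apply HKlip; auto|].
      apply Rmult_le_compat_l; [exact HK | exact Hsu2].
Qed.

Definition tangent_separated n (cj ck : curve) (Lj Lk a tau0 : R) : Prop :=
  forall tau, 0 < tau <= tau0 ->
  forall s u, 0 <= s <= Lj -> 0 <= u <= Lk -> tau <= s + u ->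
    Rpower tau a <= edist n (tvec cj s) (tvec ck u).

Section TangentSeparation.
Variables (n : nat) (cj ck : curve) (Lj Lk a : R).
Hypothesis a_pos : 0 < a.
Hypothesis tangent_gap_monotone : forall s s' u u',
  0 <= s <= Lj -> 0 <= s' <= Lj -> 0 <= u <= Lk -> 0 <= u' <= Lk ->
  s + u <= s' + u' -> edist n (tvec cj s) (tvec ck u) <= edist n (tvec cj s') (tvec ck u').

Lemma separated_of_distinct_tangents : 0 <= Lj -> 0 <= Lk ->
  0 < edist n (tvec cj 0) (tvec ck 0) ->
  exists tau0, 0 < tau0 /\ tangent_separated n cj ck Lj Lk a tau0.
Proof.
  intros HLj HLk Hd0. set (d0 := edist n (tvec cj 0) (tvec ck 0)) in *.
  exists (Rpower d0 (/ a)). split; [apply exp_pos|].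
  intros tau Htau s u Hs Hu Hsu. apply Rle_trans with d0.
  - replace d0 with (Rpower (Rpower d0 (/ a)) a)
      by (rewrite Rpower_mult, Rinv_l, Rpower_1 by lra; reflexivity).
    apply Rle_Rpower_l; lra.
  - apply tangent_gap_monotone; lra.
Qed.

Lemma separated_of_common_tangent (xi : point) (rho : R) : 0 < Lj -> 0 <= Lk -> 0 < rho ->
  smooth_curve n cj -> unit_speed n cj Lj -> pt_eq n (cj 0) xi ->
  pt_eq n (tvec cj 0) (tvec ck 0) ->
  (forall s, 0 < s <= Lj -> edist n (cj s) xi < rho ->
     Rpower s a <= edist n (tvec cj s) (tvec cj 0)) ->
  exists tau0, 0 < tau0 /\ tangent_separated n cj ck Lj Lk a tau0.
Proof.
  intros HLj HLk Hrho Hsm Hun Hxi Ht0 A3.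
  (* below [t1], [x_j(tau)] stays within [sqrt n * tau < rho] of [x_i], where (A3) applies *)
  set (t1 := rho / (sqrt (INR n) + 1)).
  assert (Hsn := sqrt_pos (INR n)).
  assert (Ht1 : 0 < t1) by (apply Rdiv_lt_0_compat; lra).
  exists (Rmin Lj t1). split; [apply Rmin_pos; lra|].
  intros tau [Htau Htau0] s u Hs Hu Hsu.
  pose proof (Rmin_l Lj t1). pose proof (Rmin_r Lj t1).
  apply Rle_trans with (edist n (tvec cj tau) (tvec ck 0)); [| apply tangent_gap_monotone; lra].
  replace (edist n (tvec cj tau) (tvec ck 0)) with (edist n (tvec cj tau) (tvec cj 0))
    by (unfold edist; f_equal; apply dist2_ext; [intros m _; reflexivity | exact Ht0]).
  apply A3; [lra|].
  assert (Hnear : edist n (cj tau) xi <= sqrt (INR n) * tau).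
  { unfold edist.
    rewrite (dist2_ext n (cj tau) xi (cj tau) (cj 0))
      by first [intros m _; reflexivity | intros m Hm; symmetry; apply Hxi, Hm].
    replace (sqrt (INR n) * tau) with (sqrt (INR n * (tau - 0) ^ 2))
      by (rewrite sqrt_mult_alt, Rminus_0_r, sqrt_pow2 by (lra || apply pos_INR); reflexivity).
    apply sqrt_le_1_alt, (dist2_curve_le n cj Lj); auto; lra. }
  assert (sqrt (INR n) * tau < rho).
  { apply Rle_lt_trans with (sqrt (INR n) * t1); [apply Rmult_le_compat_l; lra|].
    replace rho with ((sqrt (INR n) + 1) * t1) by (unfold t1; field; lra). nra. }
  lra.
Qed.

Lemma tangent_separation (xi : point) (rho : R) : 0 < Lj -> 0 <= Lk -> 0 < rho ->
  smooth_curve n cj -> unit_speed n cj Lj -> pt_eq n (cj 0) xi ->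
  (forall s, 0 < s <= Lj -> edist n (cj s) xi < rho ->
     Rpower s a <= edist n (tvec cj s) (tvec cj 0)) ->
  exists tau0, 0 < tau0 /\ tangent_separated n cj ck Lj Lk a tau0.
Proof.
  intros HLj HLk Hrho Hsm Hun Hxi A3.
  destruct (Rle_lt_or_eq_dec _ _ (sqrt_pos (dist2 n (tvec cj 0) (tvec ck 0)))) as [Hd0 | Hd0].
  - apply separated_of_distinct_tangents; [lra | lra | exact Hd0].
  - apply (separated_of_common_tangent xi rho); auto.
    apply dist2_eq0, sqrt_eq_0; [apply dist2_nonneg | symmetry; exact Hd0].
Qed.

End TangentSeparation.

Lemma pow_div_fact_le_exp y N : 0 <= y -> y ^ N / INR (Factorial.fact N) <= exp y.
Proof.
  intros Hy. pose proof (exp_ge_taylor y N Hy) as H.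
  destruct N as [|N]; [simpl in *; lra|].
  rewrite tech5 in H.
  assert (0 <= sum_f_R0 (fun k => y ^ k / INR (Factorial.fact k)) N).
  { apply cond_pos_sum. intros k.
    apply Rdiv_le_0_compat; [apply pow_le; lra | apply INR_fact_lt_0]. }
  lra.
Qed.

Lemma exp_neg_le_fact_div_pow y N : 0 < y -> exp (- y) <= INR (Factorial.fact N) / y ^ N.
Proof.
  intros Hy. rewrite exp_Ropp, <- (Rinv_div (y ^ N)).
  apply Rinv_le_contravar; [| apply pow_div_fact_le_exp; lra].
  apply Rdiv_lt_0_compat; [apply pow_lt, Hy | apply INR_fact_lt_0].
Qed.

Lemma Rpower_le_sq_lt1 x p : 0 < x < 1 -> 2 <= p -> Rpower x p <= x ^ 2.
Proof.
  intros Hx Hp. rewrite <- Rpower_pow by lra. unfold Rpower. apply exp_le_compat.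
  assert (ln x < 0) by (rewrite <- ln_1; apply ln_increasing; lra).
  simpl INR. nra.
Qed.

Lemma gauss_exponent_eq a D k sg : 0 < D -> 0 < k -> 0 < sg ->
  Rpower (D * sg) a / (k * sg) ^ 2 = Rpower D a / k ^ 2 * Rpower sg (a - 2).
Proof.
  intros HD Hk Hsg.
  rewrite <- Rpower_mult_distr by lra.
  replace (Rpower sg a) with (Rpower sg (a - 2) * sg ^ 2)
    by (rewrite <- (Rpower_pow 2 sg), <- Rpower_plus by lra; f_equal; simpl; ring).
  field. lra.
Qed.

Lemma gaussian_tail_little_o a D k L : 0 < a < 2 -> 0 < D -> 0 < k -> 0 <= L ->
  exists delta, 0 < delta /\ forall sg, 0 < sg < delta ->
    L * exp (- Rpower (D * sg) a / (k * sg) ^ 2) <= D * sg.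
Proof.
  intros Ha HD Hk HL.
  destruct (INR_archimed (2 - a) 2 ltac:(lra)) as [N HN].
  set (A := Rpower D a / k ^ 2).
  assert (HA : 0 < A) by (apply Rdiv_lt_0_compat; [apply exp_pos | apply pow_lt; lra]).
  set (B := INR (Factorial.fact N) / A ^ N).
  assert (HB : 0 < B) by (apply Rdiv_lt_0_compat; [apply INR_fact_lt_0 | apply pow_lt; lra]).
  exists (Rmin 1 (D / (L * B + 1))).
  split; [apply Rmin_pos; [lra | apply Rdiv_lt_0_compat; nra]|].
  intros sg [Hsg Hsgd].
  pose proof (Rmin_l 1 (D / (L * B + 1))). pose proof (Rmin_r 1 (D / (L * B + 1))).
  assert (HP : 0 < Rpower sg (a - 2)) by apply exp_pos.
  assert (Htail : exp (- Rpower (D * sg) a / (k * sg) ^ 2) <= B * sg ^ 2).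
  { replace (- Rpower (D * sg) a / (k * sg) ^ 2) with (- (A * Rpower sg (a - 2)))
      by (unfold A; rewrite <- gauss_exponent_eq by lra; unfold Rdiv; ring).
    eapply Rle_trans; [apply (exp_neg_le_fact_div_pow _ N); apply Rmult_lt_0_compat; lra|].
    replace (INR (Factorial.fact N) / (A * Rpower sg (a - 2)) ^ N)
      with (B * Rpower sg (INR N * (2 - a))).
    - apply Rmult_le_compat_l; [lra | apply Rpower_le_sq_lt1; lra].
    - unfold B. rewrite Rpow_mult_distr, <- (Rpower_pow N (Rpower sg (a - 2))), Rpower_mult by lra.
      replace (INR N * (2 - a)) with (- ((a - 2) * INR N)) by ring.
      rewrite Rpower_Ropp. field. split; [apply Rgt_not_eq, exp_pos | apply pow_nonzero; lra]. }
  assert (Hsg' : sg * (L * B + 1) < D).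
  { apply Rlt_le_trans with (D / (L * B + 1) * (L * B + 1)); [apply Rmult_lt_compat_r; nra|].
    right. field. nra. }
  assert (L * exp (- Rpower (D * sg) a / (k * sg) ^ 2) <= L * (B * sg ^ 2))
    by (apply Rmult_le_compat_l; lra).
  nra.
Qed.

Lemma vip_cross_upper n cj ck Lj Lk a tau0 k2 D : 0 < Lj -> 0 < Lk -> 0 < a < 2 ->
  0 < tau0 -> 0 < k2 -> 0 < D -> smooth_curve n cj -> smooth_curve n ck ->
  tangent_separated n cj ck Lj Lk a tau0 ->
  exists delta, 0 < delta /\ forall sx st, 0 < sx < delta -> 0 < st <= k2 * sx ->
    vip n sx st cj Lj ck Lk <= 2 * (D * sx).
Proof.
  intros HLj HLk Ha Htau0 Hk2 HD Hcj Hck Hsep.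
  destruct (gaussian_tail_little_o a D k2 (Lj * Lk) Ha HD Hk2 ltac:(nra)) as [d [Hd Htail]].
  set (t0 := Rmin tau0 (Rmin Lj Lk)).
  assert (Ht0 : 0 < t0) by (apply Rmin_pos; [| apply Rmin_pos]; lra).
  assert (Ht0j : t0 <= Lj) by (eapply Rle_trans; [apply Rmin_r | apply Rmin_l]).
  assert (Ht0k : t0 <= Lk) by (eapply Rle_trans; [apply Rmin_r | apply Rmin_r]).
  assert (Ht00 : t0 <= tau0) by apply Rmin_l.
  exists (Rmin d (t0 ^ 2 / D)).
  split; [apply Rmin_pos; [| apply Rdiv_lt_0_compat; [apply pow_lt|]]; lra|].
  intros sx st [Hsx Hsxd] Hst.
  pose proof (Rmin_l d (t0 ^ 2 / D)). pose proof (Rmin_r d (t0 ^ 2 / D)).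
  set (tau := sqrt (D * sx)).
  assert (Htau : 0 < tau) by (apply sqrt_lt_R0; nra).
  assert (Htau2 : tau * tau = D * sx) by (apply sqrt_sqrt; nra).
  assert (Htaut0 : tau <= t0).
  { apply Rlt_le, Rsqr_incrst_0; try lra. unfold Rsqr. rewrite Htau2.
    apply Rmult_lt_reg_r with (/ D); [apply Rinv_0_lt_compat; lra|].
    replace (D * sx * / D) with sx by (field; lra). unfold Rdiv in *. simpl in *. lra. }
  set (eta := exp (- Rpower (D * sx) a / (k2 * sx) ^ 2)).
  assert (Heta : Lj * Lk * eta <= D * sx) by (apply Htail; lra).
  rewrite vip_RInt_rect.
  apply Rle_trans with (tau ^ 2 + Lj * Lk * eta); [| simpl; lra].
  apply RInt_rect_upper; try lra.
  - intros; apply continuity_2d_pt_vkernel; auto.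
  - intros; apply vkernel_le1; lra.
  - apply Rlt_le, exp_pos.
  - intros s u Hs Hu Hsu.
    eapply Rle_trans; [apply vkernel_le_tangent_factor, Hsx|].
    apply exp_neg_div_sq_le; [| lra].
    rewrite <- Htau2, <- Rpower_mult_distr by lra.
    assert (Hgap : Rpower tau a <= edist n (tvec cj s) (tvec ck u)) by (apply Hsep; lra).
    unfold edist in Hgap. rewrite <- (sqrt_sqrt (dist2 n _ _)) by apply dist2_nonneg.
    assert (0 < Rpower tau a) by apply exp_pos.
    split; [nra | apply Rmult_le_compat; lra].
Qed.

Theorem lemma2 (n : nat) (T : rooted_tree) (E : tree_embedding n T)
    (i j k : node T) :
  parent T j = Some i -> parent T k = Some i -> j <> k ->
  (* (A2) *)
  (forall s s' u u',
      0 <= s <= elen E j -> 0 <= s' <= elen E j ->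
      0 <= u <= elen E k -> 0 <= u' <= elen E k ->
      s + u <= s' + u' ->
      edist n (tvec (earc E j) s) (tvec (earc E k) u)
        <= edist n (tvec (earc E j) s') (tvec (earc E k) u')) ->
  (* (A3) *)
  (exists rho a, 0 < rho /\ 0 < a < 2 /\
     (forall s, 0 < s <= elen E j -> edist n (earc E j s) (npos E i) < rho ->
        Rpower s a <= edist n (tvec (earc E j) s) (tvec (earc E j) 0)) /\
     (forall u, 0 < u <= elen E k -> edist n (earc E k u) (npos E i) < rho ->
        Rpower u a <= edist n (tvec (earc E k) u) (tvec (earc E k) 0))) ->
  (* conclusion: little-o as sx, st -> 0 with sx ≍ st *)
  forall k1 k2, 0 < k1 -> 0 < k2 ->
  forall eps, 0 < eps ->
  exists delta, 0 < delta /\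
    forall sx st, 0 < sx < delta -> 0 < st < delta ->
      k1 * sx <= st <= k2 * sx ->
      Rabs (vip n sx st (earc E j) (elen E j) (earc E k) (elen E k))
        <= eps * (vip n sx st (earc E j) (elen E j) (earc E j) (elen E j)
                  + vip n sx st (earc E k) (elen E k) (earc E k) (elen E k)).
Proof.
  intros Hj Hk _ A2 [rho [a [Hrho [Ha [A3j _]]]]] k1 k2 Hk1 Hk2 eps Heps.
  destruct (edge_ok n T E j i Hj) as [HLj [Hcj [Hunj [Hxi _]]]].
  destruct (edge_ok n T E k i Hk) as [HLk [Hck _]].
  destruct (vip_self_lower n (earc E j) (elen E j) k1 HLj Hk1 Hcj Hunj) as [c0 [Hc0 Hself]].
  destruct (tangent_separation n (earc E j) (earc E k) (elen E j) (elen E k) a (proj1 Ha) A2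
              (npos E i) rho HLj (Rlt_le _ _ HLk) Hrho Hcj Hunj Hxi A3j) as [tau0 [Htau0 Hsep]].
  destruct (vip_cross_upper n (earc E j) (earc E k) (elen E j) (elen E k) a tau0 k2 (eps * c0 / 2))
    as [d [Hd Hcross]]; auto; [nra|].
  exists (Rmin d (elen E j / 2)). split; [apply Rmin_pos; lra|].
  intros sx st [Hsx Hsxd] [Hst _] [Hk1s Hk2s].
  pose proof (Rmin_l d (elen E j / 2)). pose proof (Rmin_r d (elen E j / 2)).
  specialize (Hself sx st Hsx ltac:(lra) Hk1s).
  specialize (Hcross sx st ltac:(lra) ltac:(lra)).
  pose proof (vip_ge0 n sx st (earc E j) (elen E j) (earc E k) (elen E k)) as Hjk.
  pose proof (vip_ge0 n sx st (earc E k) (elen E k) (earc E k) (elen E k)) as Hkk.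
  rewrite Rabs_pos_eq by (apply Hjk; auto; lra).
  assert (0 <= vip n sx st (earc E k) (elen E k) (earc E k) (elen E k)) by (apply Hkk; auto; lra).
  nra.
Qed.
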